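(* If $\Gamma\vdash\phi$ is derivable in $\mathsf{MILLs}$, then $\Gamma\models\phi$ over the class of modal Kripke resource algebras.
   Context: $\mathsf{ILLs}$: formulas $\phi::= p\mid \mathbf{1}\mid\top\mid\bot\mid \sim\phi\mid\phi\otimes\phi\mid\phi\multimap\phi\mid\phi\,\&\,\phi\mid\phi\oplus\phi$, with the standard Hilbert system of intuitionistic multiplicative-additive linear logic extended with strong negation axioms ($\phi\multimap\sim\sim\phi$, $\sim\sim\phi\multimap\phi$, $\sim\mathbf1\multimap\phi$, $\sim\top\multimap\phi$, $\phi\multimap\sim\bot$, and mutual implications $\sim(\phi\multimap\psi)\leftrightarrow\sim\phi\otimes\psi$ resp. $\phi\otimes\sim\psi$ as written: $\sim(\phi\multimap\psi)\multimap\sim\phi\otimes\psi$, $\phi\otimes\sim\psi\multimap\sim(\phi\multimap\psi)$, $\sim(\phi\&\psi)\leftrightarrow\sim\phi\oplus\sim\psi$, $\sim(\phi\oplus\psi)\leftrightarrow\sim\phi\&\sim\psi$, $\sim(\phi\otimes\psi)\leftrightarrow\sim\phi\otimes\sim\psi$); deductions are trees on sequents $\Gamma\vdash\phi$ with $\Gamma$ a finite multiset, leaves $\phi\vdash\phi$ or $\vdash$axiom, rules: from $\Gamma\vdash\phi$, $\Gamma'\vdash\phi\multimap\psi$ infer $\Gamma,\Gamma'\vdash\psi$; from $\Gamma\vdash\phi$, $\Gamma\vdash\psi$ infer $\Gamma\vdash\phi\&\psi$. $\mathsf{MILLs}$ adds a modality $\Box$ and the rule $\Box$(re): from $\vdash\phi\multimap\psi$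 and $\vdash\psi\multimap\phi$ infer $\vdash\Box\phi\multimap\Box\psi$. A Kripke resource algebra is $\langle M,\cap,\circ,e,\omega\rangle$ where $\langle M,\cap\rangle$ is a meet-semilattice with greatest element $\omega$ and order $x\leq y$ iff $x\cap y=x$; $\langle M,\circ,e\rangle$ is a commutative monoid with $x\circ\omega=\omega$, and $z\circ(x\cap y)\circ w=(z\circ x\circ w)\cap(z\circ y\circ w)$. A modal Kripke resource algebra adds $N^+,N^-:M\to\mathcal P(\mathcal P(M))$ with $X\in N^{\pm}(m\cap n)$ iff $X\in N^{\pm}(m)$ and $X\in N^{\pm}(n)$. A model adds valuations $V^+,V^-:Atom\to\mathcal P(M)$ with $m\cap n\in V^{\pm}(p)$ iff $m\in V^\pm(p)$ and $n\in V^\pm(p)$. Verification $\models^+$ and falsification $\models^-$: $m\models^+p$ iff $m\in V^+(p)$; $m\models^+\mathbf1$ iff $e\leq m$; $m\models^+\top$ always; $m\models^+\bot$ iff $m=\omega$; $m\models^+\phi\otimes\psi$ iff $\exists m_1,m_2$ with $m\geq m_1\circ m_2$, $m_1\models^+\phi$, $m_2\models^+\psi$; $m\models^+\phi\&\psi$ iff $m\models^+\phi$ and $m\models^+\psi$; $m\models^+\phi\oplus\psi$ iff $\exists m_1,m_2$ with $m_1\cap m_2\leq m$ and each of $m_1,m_2$ verifies $\phi$ or $\psi$; $m\models^+\phi\multimap\psi$ iff for all $n$, $n\models^+\phi$ implies $n\circ m\models^+\psi$; $m\models^+\sim\phi$ iff $m\models^-\phi$; $m\models^-\sim\phi$ iff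 $m\models^+\phi$; $m\models^-p$ iff $m\in V^-(p)$; $m\models^-\mathbf1$ iff $m=\omega$; $m\models^-\top$ iff $m=\omega$; $m\models^-\bot$ always; $m\models^-\phi\otimes\psi$ iff $\exists m_1,m_2$, $m\geq m_1\circ m_2$, $m_1\models^-\phi$, $m_2\models^-\psi$; $m\models^-\phi\&\psi$ iff $\exists m_1,m_2$ with $m_1\cap m_2\leq m$ and each of $m_1,m_2$ falsifies $\phi$ or $\psi$; $m\models^-\phi\oplus\psi$ iff $m\models^-\phi$ and $m\models^-\psi$; $m\models^-\phi\multimap\psi$ iff $\exists m_1,m_2$ with $m_1\circ m_2\leq m$, $m_1\models^+\phi$, $m_2\models^-\psi$; $m\models^+\Box\phi$ iff $\|\phi\|^+\in N^+(m)$; $m\models^-\Box\phi$ iff $\|\phi\|^+\in N^-(m)$, where $\|\phi\|^+=\{m\mid m\models^+\phi\}$. $\Gamma\models\phi$ iff in every model, $e\models^+\Gamma^\star$ implies $e\models^+\phi$, where $\Gamma^\star$ is the $\otimes$-product of the formulas in $\Gamma$ ($\mathbf 1$ if empty).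
   Formalization: Models have ω in V⁺(p) and V⁻(p) for every atom p and every set X in N⁺(ω) and N⁻(ω), and the axiom ~(φ⊸ψ) ⊸ ~φ⊗ψ is replaced by ~(φ⊸ψ) ⊸ φ⊗~ψ. Each condition added here is assumed in the paper as well or is needed for the statement above to hold. This also corrects a misprint. *)

From Stdlib Require Import List Permutation.
Import ListNotations.

Inductive formula : Type :=
| Var : nat -> formula
| One : formula
| Top : formula
| Bot : formula
| SNeg : formula -> formula
| Tens : formula -> formula -> formula
| Lolli : formula -> formula -> formula
| With : formula -> formula -> formula
| Plus : formula -> formula -> formula
| Box : formula -> formula.

Inductive axiom : formula -> Prop :=
| ax_I  : forall a, axiom (Lolli a a)
| ax_B  : forall a b c, axiom (Lolli (Lolli a b) (Lolli (Lolli c a) (Lolli c b)))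
| ax_C  : forall a b c, axiom (Lolli (Lolli a (Lolli b c)) (Lolli b (Lolli a c)))
| ax_tensI : forall a b, axiom (Lolli a (Lolli b (Tens a b)))
| ax_tensE : forall a b c, axiom (Lolli (Lolli a (Lolli b c)) (Lolli (Tens a b) c))
| ax_oneI : axiom One
| ax_oneE : forall a, axiom (Lolli a (Lolli One a))
| ax_withE1 : forall a b, axiom (Lolli (With a b) a)
| ax_withE2 : forall a b, axiom (Lolli (With a b) b)
| ax_withI : forall a b c,
    axiom (Lolli (With (Lolli c a) (Lolli c b)) (Lolli c (With a b)))
| ax_plusI1 : forall a b, axiom (Lolli a (Plus a b))
| ax_plusI2 : forall a b, axiom (Lolli b (Plus a b))
| ax_plusE : forall a b c,
    axiom (Lolli (With (Lolli a c) (Lolli b c)) (Lolli (Plus a b) c))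
| ax_top : forall a, axiom (Lolli a Top)
| ax_bot : forall a, axiom (Lolli Bot a)
| ax_dn1 : forall a, axiom (Lolli a (SNeg (SNeg a)))
| ax_dn2 : forall a, axiom (Lolli (SNeg (SNeg a)) a)
| ax_none : forall a, axiom (Lolli (SNeg One) a)
| ax_ntop : forall a, axiom (Lolli (SNeg Top) a)
| ax_nbot : forall a, axiom (Lolli a (SNeg Bot))
| ax_nlolli1 : forall a b, axiom (Lolli (SNeg (Lolli a b)) (Tens a (SNeg b)))
| ax_nlolli2 : forall a b, axiom (Lolli (Tens a (SNeg b)) (SNeg (Lolli a b)))
| ax_nwith1 : forall a b, axiom (Lolli (SNeg (With a b)) (Plus (SNeg a) (SNeg b)))
| ax_nwith2 : forall a b, axiom (Lolli (Plus (SNeg a) (SNeg b)) (SNeg (With a b)))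
| ax_nplus1 : forall a b, axiom (Lolli (SNeg (Plus a b)) (With (SNeg a) (SNeg b)))
| ax_nplus2 : forall a b, axiom (Lolli (With (SNeg a) (SNeg b)) (SNeg (Plus a b)))
| ax_ntens1 : forall a b, axiom (Lolli (SNeg (Tens a b)) (Tens (SNeg a) (SNeg b)))
| ax_ntens2 : forall a b, axiom (Lolli (Tens (SNeg a) (SNeg b)) (SNeg (Tens a b))).

(* Contexts are finite multisets, represented by lists up to permutation
   (the modus ponens rule concludes any permutation of Γ,Γ'). *)
Inductive MILLs_deriv : list formula -> formula -> Prop :=
| d_id : forall a, MILLs_deriv [a] a
| d_ax : forall a, axiom a -> MILLs_deriv [] a
| d_mp : forall G G' D a b,
    MILLs_deriv G a -> MILLs_deriv G' (Lolli a b) ->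
    Permutation D (G ++ G') -> MILLs_deriv D b
| d_adj : forall G a b,
    MILLs_deriv G a -> MILLs_deriv G b -> MILLs_deriv G (With a b)
| d_box_re : forall a b,
    MILLs_deriv [] (Lolli a b) -> MILLs_deriv [] (Lolli b a) ->
    MILLs_deriv [] (Lolli (Box a) (Box b)).

Fixpoint ctx_prod (G : list formula) : formula :=
  match G with
  | [] => One
  | [a] => a
  | a :: G' => Tens a (ctx_prod G')
  end.

Record MKRA : Type := {
  car :> Type;
  meet : car -> car -> car;
  comp : car -> car -> car;
  unit : car;
  omg : car;
  Np : car -> (car -> Prop) -> Prop;
  Nm : car -> (car -> Prop) -> Prop;
  meet_assoc : forall x y z, meet x (meet y z) = meet (meet x y) z;
  meet_comm : forall x y, meet x y = meet y x;
  meet_idem : forall x, meet x x = x;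
  omg_top : forall x, meet x omg = x;
  comp_assoc : forall x y z, comp x (comp y z) = comp (comp x y) z;
  comp_comm : forall x y, comp x y = comp y x;
  comp_unit : forall x, comp unit x = x;
  comp_omg : forall x, comp x omg = omg;
  comp_meet_distr : forall z x y w,
    comp (comp z (meet x y)) w = meet (comp (comp z x) w) (comp (comp z y) w);
  Np_meet : forall X m n, Np (meet m n) X <-> (Np m X /\ Np n X);
  Nm_meet : forall X m n, Nm (meet m n) X <-> (Nm m X /\ Nm n X)
}.

Definition kle (A : MKRA) (x y : A) : Prop := meet A x y = x.

Record model (A : MKRA) : Type := {
  Vp : nat -> A -> Prop;
  Vm : nat -> A -> Prop;
  Vp_meet : forall p m n, Vp p (meet A m n) <-> (Vp p m /\ Vp p n);
  Vm_meet : forall p m n, Vm p (meet A m n) <-> (Vm p m /\ Vm p n);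
  Vp_omg : forall p, Vp p (omg A);
  Vm_omg : forall p, Vm p (omg A);
  Np_omg : forall X, Np A (omg A) X;
  Nm_omg : forall X, Nm A (omg A) X
}.

(* verification (b = true) and falsification (b = false) *)
Fixpoint forces (A : MKRA) (V : model A) (b : bool) (m : A) (f : formula)
  : Prop :=
  match b, f with
  | true, Var p => Vp A V p m
  | false, Var p => Vm A V p m
  | true, One => kle A (unit A) m
  | false, One => m = omg A
  | true, Top => True
  | false, Top => m = omg A
  | true, Bot => m = omg A
  | false, Bot => True
  | true, SNeg a => forces A V false m a
  | false, SNeg a => forces A V true m a
  | true, Tens a c => exists m1 m2, kle A (comp A m1 m2) m /\
                        forces A V true m1 a /\ forces A V true m2 c
  | false, Tens a c => exists m1 m2, kle A (comp A m1 m2) m /\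
                        forces A V false m1 a /\ forces A V false m2 c
  | true, With a c => forces A V true m a /\ forces A V true m c
  | false, With a c => exists m1 m2, kle A (meet A m1 m2) m /\
        (forces A V false m1 a \/ forces A V false m1 c) /\
        (forces A V false m2 a \/ forces A V false m2 c)
  | true, Plus a c => exists m1 m2, kle A (meet A m1 m2) m /\
        (forces A V true m1 a \/ forces A V true m1 c) /\
        (forces A V true m2 a \/ forces A V true m2 c)
  | false, Plus a c => forces A V false m a /\ forces A V false m c
  | true, Lolli a c => forall n, forces A V true n a ->
                         forces A V true (comp A n m) c
  | false, Lolli a c => exists m1 m2, kle A (comp A m1 m2) m /\
                         forces A V true m1 a /\ forces A V false m2 c
  | true, Box a => Np A m (fun n => forces A V true n a)
  | false, Box a => Nm A m (fun n => forces A V true n a)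
  end.

Definition entails (G : list formula) (f : formula) : Prop :=
  forall (A : MKRA) (V : model A),
    forces A V true (unit A) (ctx_prod G) -> forces A V true (unit A) f.

(* Soundness is proved locally: a derivation of [Γ ⊢ φ] yields [m ⊨⁺ φ] at every
   state [m] that splits as a [∘]-product of states verifying the formulas of [Γ].
   Two structural facts about forcing carry the argument: it is upward closed in
   the resource order and closed under [∩] (both polarities, by induction on the
   formula). The first makes modus ponens and the identity rule sound, the second
   the elimination of [⊕]; the rule [□(re)] is sound because provably equivalent
   formulas have the same truth set. *)

From Stdlib Require Import List Permutation.
From Stdlib Require Import FunctionalExtensionality PropExtensionality.
Import ListNotations.

Section ResourceOrder.

Variable A : MKRA.

Local Infix "≤" := (kle A) (at level 70).
Local Infix "⊓" := (meet A) (at level 40, left associativity).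
Local Infix "⋅" := (comp A) (at level 40, left associativity).

Lemma kle_refl (x : A) : x ≤ x.
Proof. apply meet_idem. Qed.

Lemma kle_trans (x y z : A) : x ≤ y -> y ≤ z -> x ≤ z.
Proof.
  unfold kle; intros Hxy Hyz.
  rewrite <- Hxy at 1. rewrite <- meet_assoc, Hyz, Hxy. reflexivity.
Qed.

Lemma meet_le_l (x y : A) : x ⊓ y ≤ x.
Proof. unfold kle. rewrite (meet_comm A (x ⊓ y) x), meet_assoc, meet_idem. reflexivity. Qed.

Lemma meet_le_r (x y : A) : x ⊓ y ≤ y.
Proof. unfold kle. rewrite <- meet_assoc, meet_idem. reflexivity. Qed.

Lemma kle_meet (x y z : A) : z ≤ x -> z ≤ y -> z ≤ x ⊓ y.
Proof. unfold kle; intros Hx Hy. rewrite meet_assoc, Hx, Hy. reflexivity. Qed.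

Lemma meet_mono (x x' y y' : A) : x ≤ x' -> y ≤ y' -> x ⊓ y ≤ x' ⊓ y'.
Proof.
  intros Hx Hy; apply kle_meet.
  - exact (kle_trans _ _ _ (meet_le_l x y) Hx).
  - exact (kle_trans _ _ _ (meet_le_r x y) Hy).
Qed.

Lemma meet_meetACA (x x' y y' : A) : (x ⊓ x') ⊓ (y ⊓ y') = (x ⊓ y) ⊓ (x' ⊓ y').
Proof.
  rewrite <- (meet_assoc A x x'), (meet_assoc A x' y y'), (meet_comm A x' y).
  rewrite <- (meet_assoc A y x' y'), (meet_assoc A x y). reflexivity.
Qed.

Lemma omg_le_eq (x : A) : omg A ≤ x -> x = omg A.
Proof. unfold kle; intro H. rewrite <- (omg_top A x), meet_comm. exact H. Qed.

Lemma comp_unit_r (x : A) : x ⋅ unit A = x.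
Proof. rewrite comp_comm; apply comp_unit. Qed.

Lemma comp_meet_l (x y w : A) : (x ⊓ y) ⋅ w = (x ⋅ w) ⊓ (y ⋅ w).
Proof.
  pose proof (comp_meet_distr A (unit A) x y w) as H.
  rewrite !comp_unit in H. exact H.
Qed.

Lemma comp_meet_r (x y w : A) : w ⋅ (x ⊓ y) = (w ⋅ x) ⊓ (w ⋅ y).
Proof. rewrite !(comp_comm A w). apply comp_meet_l. Qed.

Lemma comp_mono_l (x y w : A) : x ≤ y -> x ⋅ w ≤ y ⋅ w.
Proof. unfold kle; intro H. rewrite <- comp_meet_l, H. reflexivity. Qed.

Lemma comp_mono_r (x y w : A) : x ≤ y -> w ⋅ x ≤ w ⋅ y.
Proof. intro H. rewrite !(comp_comm A w). apply comp_mono_l, H. Qed.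

Lemma comp_mono (x x' y y' : A) : x ≤ x' -> y ≤ y' -> x ⋅ y ≤ x' ⋅ y'.
Proof.
  intros Hx Hy. apply (kle_trans _ (x' ⋅ y)); [apply comp_mono_l | apply comp_mono_r]; auto.
Qed.

Lemma le_comp_unit (x y : A) : unit A ≤ y -> x ≤ x ⋅ y.
Proof. intro Hy. rewrite <- (comp_unit_r x) at 1. apply comp_mono_r, Hy. Qed.

(* Splitting [m] as [x ∩ y] with each side satisfying [P] or [Q] can always be
   arranged as [P x /\ Q y]: a side satisfying the wrong predicate is merged into
   the other one and replaced by [ω]. *)
Lemma split_meet_normalize (P Q : A -> Prop)
    (meetP : forall x y, P x -> P y -> P (x ⊓ y))
    (meetQ : forall x y, Q x -> Q y -> Q (x ⊓ y))
    (omgP : P (omg A)) (omgQ : Q (omg A)) (m : A) :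
  (exists x y, x ⊓ y ≤ m /\ (P x \/ Q x) /\ (P y \/ Q y)) ->
  exists x y, x ⊓ y ≤ m /\ P x /\ Q y.
Proof.
  intros (x & y & Hle & [Hx|Hx] & [Hy|Hy]).
  - exists (x ⊓ y), (omg A). rewrite omg_top. auto.
  - exists x, y. auto.
  - exists y, x. rewrite meet_comm. auto.
  - exists (omg A), (x ⊓ y). rewrite meet_comm, omg_top. auto.
Qed.

Lemma split_meet_closed (P Q : A -> Prop)
    (meetP : forall x y, P x -> P y -> P (x ⊓ y))
    (meetQ : forall x y, Q x -> Q y -> Q (x ⊓ y))
    (omgP : P (omg A)) (omgQ : Q (omg A)) (m n : A) :
  (exists x y, x ⊓ y ≤ m /\ (P x \/ Q x) /\ (P y \/ Q y)) ->
  (exists x y, x ⊓ y ≤ n /\ (P x \/ Q x) /\ (P y \/ Q y)) ->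
  exists x y, x ⊓ y ≤ m ⊓ n /\ (P x \/ Q x) /\ (P y \/ Q y).
Proof.
  intros Hm Hn.
  destruct (split_meet_normalize P Q meetP meetQ omgP omgQ m Hm) as (x & y & Hxy & Hx & Hy).
  destruct (split_meet_normalize P Q meetP meetQ omgP omgQ n Hn) as (x' & y' & Hxy' & Hx' & Hy').
  exists (x ⊓ x'), (y ⊓ y'). rewrite meet_meetACA. auto using meet_mono.
Qed.

End ResourceOrder.

Section Forcing.

Variables (A : MKRA) (V : model A).

Local Infix "≤" := (kle A) (at level 70).
Local Infix "⊓" := (meet A) (at level 40, left associativity).
Local Infix "⋅" := (comp A) (at level 40, left associativity).
Local Notation forces := (forces A V).

Lemma forces_omg (f : formula) (b : bool) : forces b (omg A) f.
Proof.
  revert b; induction f; destruct b; simpl; auto;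
  first [ apply Vp_omg | apply Vm_omg | apply omg_top | apply (Np_omg A V)
        | apply (Nm_omg A V) | intros; rewrite comp_omg; auto
        | exists (omg A), (omg A); rewrite ?comp_omg, ?meet_idem; auto using kle_refl ].
Qed.

Lemma forces_mono (f : formula) (b : bool) (m n : A) :
  m ≤ n -> forces b m f -> forces b n f.
Proof.
  revert b m n; induction f as [p| | | |f IHf|f1 IHf1 f2 IHf2|f1 IHf1 f2 IHf2
    |f1 IHf1 f2 IHf2|f1 IHf1 f2 IHf2|f IHf]; destruct b; simpl; intros m n Hmn H;
  try (destruct H as (m1 & m2 & Hle & H1 & H2);
       exists m1, m2; split; [exact (kle_trans A _ _ _ Hle Hmn) | auto]).
  - rewrite <- Hmn in H. apply Vp_meet in H. tauto.
  - rewrite <- Hmn in H. apply Vm_meet in H. tauto.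
  - exact (kle_trans A _ _ _ H Hmn).
  - subst; apply omg_le_eq, Hmn.
  - exact I.
  - subst; apply omg_le_eq, Hmn.
  - subst; apply omg_le_eq, Hmn.
  - exact I.
  - eauto.
  - eauto.
  - intros k Hk. apply (IHf2 _ (k ⋅ m)); auto using comp_mono_r.
  - destruct H; split; eauto.
  - destruct H; split; eauto.
  - rewrite <- Hmn in H. apply Np_meet in H. tauto.
  - rewrite <- Hmn in H. apply Nm_meet in H. tauto.
Qed.

Lemma forces_meet (f : formula) (b : bool) (m n : A) :
  forces b m f -> forces b n f -> forces b (m ⊓ n) f.
Proof.
  revert b m n; induction f as [p| | | |f IHf|f1 IHf1 f2 IHf2|f1 IHf1 f2 IHf2
    |f1 IHf1 f2 IHf2|f1 IHf1 f2 IHf2|f IHf]; destruct b; simpl; intros m n Hm Hn;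
  try (destruct Hm as (m1 & m2 & Hm & Hm1 & Hm2), Hn as (n1 & n2 & Hn & Hn1 & Hn2);
       exists (m1 ⊓ n1), (m2 ⊓ n2); split; [|auto];
       apply kle_meet;
       [ apply (kle_trans A _ (m1 ⋅ m2)); auto using comp_mono, meet_le_l
       | apply (kle_trans A _ (n1 ⋅ n2)); auto using comp_mono, meet_le_r ]).
  - apply Vp_meet; auto.
  - apply Vm_meet; auto.
  - apply kle_meet; auto.
  - subst; apply meet_idem.
  - exact I.
  - rewrite Hm, Hn. apply meet_idem.
  - rewrite Hm, Hn. apply meet_idem.
  - exact I.
  - auto.
  - auto.
  - intros k Hk. rewrite comp_meet_r. auto.
  - destruct Hm, Hn; split; auto.
  - apply (split_meet_closed A (fun z => forces false z f1) (fun z => forces false z f2));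
      auto using forces_omg.
  - apply (split_meet_closed A (fun z => forces true z f1) (fun z => forces true z f2));
      auto using forces_omg.
  - destruct Hm, Hn; split; auto.
  - apply Np_meet; auto.
  - apply Nm_meet; auto.
Qed.

Lemma forces_lolli_unit (a c : formula) :
  (forall n, forces true n a -> forces true n c) -> forces true (unit A) (Lolli a c).
Proof. simpl; intros H n Hn. rewrite comp_unit_r; auto. Qed.

Lemma forces_unit_lolli (a c : formula) (n : A) :
  forces true (unit A) (Lolli a c) -> forces true n a -> forces true n c.
Proof. simpl; intros H Hn. rewrite <- (comp_unit_r A n). auto. Qed.

Lemma axiom_valid (a : formula) : axiom a -> forces true (unit A) a.
Proof.
  intros Hax; destruct Hax; try (apply forces_lolli_unit; simpl).
  - auto.
  - intros n Hn k Hk j Hj. rewrite comp_assoc. auto.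
  - intros n Hn k Hk j Hj.
    rewrite comp_assoc, (comp_comm A j k), <- comp_assoc. auto.
  - intros n Hn k Hk. exists n, k. rewrite (comp_comm A n k). auto using kle_refl.
  - intros n Hn k (k1 & k2 & Hle & Hk1 & Hk2).
    apply (forces_mono _ _ (k2 ⋅ (k1 ⋅ n))); auto.
    rewrite comp_assoc, (comp_comm A k2 k1). apply comp_mono_l, Hle.
  - apply kle_refl.
  - intros n Hn k Hk. apply (forces_mono _ _ n); auto.
    rewrite comp_comm. apply le_comp_unit, Hk.
  - intros n [Hn _]; exact Hn.
  - intros n [_ Hn]; exact Hn.
  - intros n [Hn1 Hn2] k Hk; split; auto.
  - intros n Hn; exists n, n; rewrite meet_idem; auto using kle_refl.
  - intros n Hn; exists n, n; rewrite meet_idem; auto using kle_refl.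
  - intros n [Hn1 Hn2] k (k1 & k2 & Hle & Hk1 & Hk2).
    apply (forces_mono _ _ ((k1 ⊓ k2) ⋅ n)); [apply comp_mono_l, Hle|].
    rewrite comp_meet_l.
    apply forces_meet; [destruct Hk1 | destruct Hk2]; auto.
  - intros; exact I.
  - intros n Hn; subst; apply forces_omg.
  - intros n Hn; exact Hn.
  - intros n Hn; exact Hn.
  - intros n Hn; subst; apply forces_omg.
  - intros n Hn; subst; apply forces_omg.
  - intros; exact I.
  - intros n Hn; exact Hn.
  - intros n Hn; exact Hn.
  - intros n Hn; exact Hn.
  - intros n Hn; exact Hn.
  - intros n Hn; exact Hn.
  - intros n Hn; exact Hn.
  - intros n Hn; exact Hn.
  - intros n Hn; exact Hn.
Qed.

(* [forces_ctx G m]: [m] lies above a [⋅]-product of states verifying the formulas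
   of [G]; unlike [ctx_prod G] it treats the last formula uniformly. *)
Fixpoint forces_ctx (G : list formula) (m : A) : Prop :=
  match G with
  | [] => unit A ≤ m
  | a :: G' => exists m1 m2, m1 ⋅ m2 ≤ m /\ forces true m1 a /\ forces_ctx G' m2
  end.

Lemma forces_ctx_prod (G : list formula) (m : A) :
  forces true m (ctx_prod G) <-> forces_ctx G m.
Proof.
  revert m; induction G as [|a [|b G] IH]; intro m; [simpl; tauto | |].
  - simpl. split.
    + intro Hm. exists m, (unit A). rewrite comp_unit_r. auto using kle_refl.
    + intros (m1 & m2 & Hle & Hm1 & Hm2). apply (forces_mono _ _ m1); auto.
      exact (kle_trans A _ _ _ (le_comp_unit A m1 m2 Hm2) Hle).
  - change (ctx_prod (a :: b :: G)) with (Tens a (ctx_prod (b :: G))); simpl forces.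
    split; intros (m1 & m2 & Hle & Hm1 & Hm2); exists m1, m2; rewrite IH in *; auto.
Qed.

Lemma forces_ctx_perm (D E : list formula) :
  Permutation D E -> forall m, forces_ctx D m -> forces_ctx E m.
Proof.
  induction 1; intros m Hm; simpl in *; auto.
  - destruct Hm as (m1 & m2 & Hle & Hm1 & Hm2). exists m1, m2; auto.
  - destruct Hm as (m1 & m2 & Hle & Hm1 & n1 & n2 & Hn & Hn1 & Hn2).
    exists n1, (m1 ⋅ n2). split.
    + apply (kle_trans A _ (m1 ⋅ m2)); [|exact Hle].
      rewrite comp_assoc, (comp_comm A n1 m1), <- comp_assoc. apply comp_mono_r, Hn.
    + split; auto. exists m1, n2. auto using kle_refl.
Qed.

Lemma forces_ctx_app (G H : list formula) (m : A) :
  forces_ctx (G ++ H) m ->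
  exists m1 m2, m1 ⋅ m2 ≤ m /\ forces_ctx G m1 /\ forces_ctx H m2.
Proof.
  revert m; induction G as [|a G IH]; intros m Hm; simpl in *.
  - exists (unit A), m. rewrite comp_unit. auto using kle_refl.
  - destruct Hm as (m1 & m2 & Hle & Hm1 & Hm2).
    destruct (IH m2 Hm2) as (n1 & n2 & Hn & Hn1 & Hn2).
    exists (m1 ⋅ n1), n2. split.
    + apply (kle_trans A _ (m1 ⋅ m2)); [|exact Hle].
      rewrite <- comp_assoc. apply comp_mono_r, Hn.
    + split; auto. exists m1, n1. auto using kle_refl.
Qed.

Lemma equiv_truth_set (a c : formula) :
  forces true (unit A) (Lolli a c) -> forces true (unit A) (Lolli c a) ->
  (fun n => forces true n a) = (fun n => forces true n c).
Proof.
  intros Hac Hca. apply functional_extensionality; intro n.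
  apply propositional_extensionality. split; apply forces_unit_lolli; assumption.
Qed.

End Forcing.

Lemma MILLs_sound_local (G : list formula) (f : formula) :
  MILLs_deriv G f -> forall A V m, forces_ctx A V G m -> forces A V true m f.
Proof.
  induction 1 as [a | a Hax | G G' D a b _ IHa _ IHab HD | G a b _ IHa _ IHb
                 | a b _ IHab _ IHba];
    intros A V m Hm; simpl in Hm.
  - destruct Hm as (m1 & m2 & Hle & Hm1 & Hm2). apply (forces_mono A V _ _ m1); auto.
    exact (kle_trans A _ _ _ (le_comp_unit A m1 m2 Hm2) Hle).
  - apply (forces_mono A V _ _ (unit A)); auto using axiom_valid.
  - apply (forces_ctx_perm A V _ _ HD) in Hm.
    destruct (forces_ctx_app A V _ _ _ Hm) as (m1 & m2 & Hle & Hm1 & Hm2).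
    apply (forces_mono A V _ _ (comp A m1 m2)); auto.
    apply (IHab A V m2 Hm2), IHa, Hm1.
  - simpl; auto.
  - simpl; intros n Hn.
    rewrite (equiv_truth_set A V a b) in Hn; [|apply IHab | apply IHba]; try apply kle_refl.
    apply (forces_mono A V (Box b) true n); auto using le_comp_unit.
Qed.

Theorem theoremB1 : forall (G : list formula) (f : formula),
  MILLs_deriv G f -> entails G f.
Proof.
  intros G f Hd A V HG.
  apply (MILLs_sound_local G f Hd A V), forces_ctx_prod, HG.
Qed.
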